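(* Let $k$ be a positive integer and let $G$ and $H$ be graphs with maximum degree $2$ such that $\mathcal{D}_k(G)=\mathcal{D}_k(H)$. Then $G$ and $H$ have the same number of components that are paths with at least $k-1$ vertices. (That is, for graphs of maximum degree $2$, this number is determined by the $k$-deck.)
   Context: The $k$-deck $\mathcal{D}_k(G)$ is the multiset of isomorphism classes of the induced subgraphs of $G$ on $k$ vertices. *)

From mathcomp Require Import all_boot.
Set Implicit Arguments. Unset Strict Implicit. Unset Printing Implicit Defensive.

Definition simple_graph (V : finType) (e : rel V) : Prop :=
  symmetric e /\ irreflexive e.

Definition max_deg_le (V : finType) (e : rel V) (d : nat) : Prop :=
  forall v : V, #|[set w | e v w]| <= d.

(* Number of k-vertex subsets S of V such that the induced subgraph e[S]
   is isomorphic to the graph F on 'I_k (i.e. the multiplicity of the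
   isomorphism class of F in the k-deck). *)
Definition deck_count (V : finType) (e : rel V) (k : nat) (F : rel 'I_k) : nat :=
  #|[set S : {set V} | (#|S| == k) &&
     [exists f : {ffun 'I_k -> V},
        [&& injectiveb f, (f @: setT == S) &
            [forall i, forall j, F i j == e (f i) (f j)]]]]|.

(* Equality of k-decks: every isomorphism class of k-vertex graphs
   (represented on 'I_k) occurs with the same multiplicity. *)
Definition same_deck (k : nat) (V1 V2 : finType) (e1 : rel V1) (e2 : rel V2) : Prop :=
  forall F : rel 'I_k, simple_graph F -> deck_count e1 F = deck_count e2 F.

Definition is_component (V : finType) (e : rel V) (C : {set V}) : bool :=
  [exists v, C == [set w | connect e v w]].

Definition induces_path (V : finType) (e : rel V) (C : {set V}) : bool :=
  [exists f : {ffun 'I_#|C| -> V},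
     [&& injectiveb f, (f @: setT == C) &
         [forall i, forall j,
            e (f i) (f j) == ((i.+1 == j :> nat) || (j.+1 == i :> nat))]]].

Definition num_path_comps_ge (V : finType) (e : rel V) (m : nat) : nat :=
  #|[set C : {set V} | [&& is_component e C, induces_path e C & m <= #|C|]]|.

From mathcomp Require Import all_boot zify.
Set Implicit Arguments. Unset Strict Implicit. Unset Printing Implicit Defensive.

(* The labelled graph of an injective tuple [t] of vertices records which
   entries of [t] are adjacent. Every k-subset inducing a copy of [F] is the
   vertex set of exactly |Aut F| tuples with labelled graph [F], so any sum over
   injective k-tuples of a function of their labelled graph is determined by
   the k-deck. So is the number n of vertices (through n^_k), and, appending a
   vertex in the n - (k - 1) possible ways, so is n - (k - 1) times any such sum
   over (k - 1)-tuples.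
   In a graph of maximum degree 2, weight every induced path [t] on k - 1
   vertices, listed in order, by 2 - deg t_0. Only ends of path components have
   degree below 2, and a path component with at least k - 1 vertices carries
   exactly one such tuple from each of its ends, so the total weight is twice
   the number of these components. Splitting deg t_0 into neighbours inside and
   outside [t] and multiplying by n - (k - 1) > 0 expresses this number through
   sums over k-tuples, which the k-deck determines. *)

(** * Labelled copies and the deck *)

(* Boolean adjacency matrices on ['I_k]; as finite functions they form a
   finType, which the counting arguments sum over. *)
Notation lgraph k := {ffun 'I_k -> {ffun 'I_k -> bool}}.

Section LabelledCopies.
Variables (V : finType) (e : rel V).

Definition tuple_lgraph k (t : k.-tuple V) : lgraph k :=
  [ffun i => [ffun j => e (tnth t i) (tnth t j)]].

Definition copies k (F : lgraph k) :=
  #|[set t : k.-tuple V | uniq t && (tuple_lgraph t == F)]|.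

Definition n_aut k (F : lgraph k) :=
  #|[set s : {ffun 'I_k -> 'I_k} | injectiveb s &&
      [forall i, forall j, F i j == F (s i) (s j)]]|.

Definition deck_sets k (F : rel 'I_k) :=
  [set S : {set V} | (#|S| == k) &&
     [exists f : {ffun 'I_k -> V},
        [&& injectiveb f, (f @: setT == S) &
            [forall i, forall j, F i j == e (f i) (f j)]]]].

Lemma card_copies_on k (F : lgraph k) S : S \in deck_sets (fun i j => F i j) ->
  #|[set t : k.-tuple V | (uniq t && (tuple_lgraph t == F)) && ([set x in t] == S)]|
    = n_aut F.
Proof.
rewrite inE => /andP[_ /existsP[f0 /and3P[/injectiveP f0inj /eqP f0S /forallP f0F]]].
(* The copies of [F] on [S] are the [f0 \o s] for the automorphisms [s] of [F]. *)
pose Phi (s : {ffun 'I_k -> 'I_k}) := [tuple f0 (s i) | i < k].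
have Phi_inj : injective Phi.
  move=> s s' eqs; apply/ffunP => i; apply: f0inj.
  by have := congr1 (fun t => tnth t i) eqs; rewrite /Phi !tnth_mktuple.
rewrite /n_aut -(card_imset _ Phi_inj); apply: eq_card => t.
apply/idP/imsetP; last first.
  move=> [s]; rewrite inE => /andP[/injectiveP sinj /forallP sF] ->.
  rewrite inE -andbA; apply/and3P; split.
  - apply/tuple_uniqP => i j; rewrite !tnth_mktuple => /f0inj; exact: sinj.
  - apply/eqP/ffunP => i; apply/ffunP => j; rewrite !ffunE !tnth_mktuple.
    have := f0F (s i) => /forallP /(_ (s j)) /eqP <-.
    by have := sF i => /forallP /(_ j) /eqP <-.
  - apply/eqP/setP => x; rewrite inE -f0S; apply/tnthP/imsetP.
      by move=> [i ->]; rewrite tnth_mktuple; exists (s i).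
    move=> [j _ ->]; have [g sg gs] := injF_bij sinj.
    by exists (g j); rewrite tnth_mktuple gs.
rewrite inE => /andP[/andP[/tuple_uniqP tinj /eqP tF] /eqP tS].
have f0_onto i : exists j, f0 j == tnth t i.
  have : tnth t i \in S by rewrite -tS inE mem_tnth.
  by rewrite -f0S => /imsetP[j _ ->]; exists j.
pose s := [ffun i => odflt i [pick j | f0 j == tnth t i]].
have f0s i : f0 (s i) = tnth t i.
  rewrite /s ffunE; case: pickP => [j /eqP //|].
  by move=> no_pick; have [j] := f0_onto i; rewrite no_pick.
exists s; last by apply: eq_from_tnth => i; rewrite tnth_mktuple f0s.
rewrite inE; apply/andP; split.
  by apply/injectiveP => i j eqij; apply: tinj; rewrite -!f0s eqij.
apply/forallP => i; apply/forallP => j.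
have := f0F (s i) => /forallP /(_ (s j)) /eqP ->.
by rewrite !f0s -tF !ffunE.
Qed.

Lemma copiesE k (F : lgraph k) : copies F = deck_count e (fun i j => F i j) * n_aut F.
Proof.
rewrite /copies -sum1dep_card (partition_big (fun t : k.-tuple V => [set x in t])
  (mem (deck_sets (fun i j => F i j)))) /=; last first.
  move=> t /andP[tu /eqP tF]; rewrite inE; apply/andP; split.
    by rewrite cardsE; move/card_uniqP: tu => ->; rewrite size_tuple.
  apply/existsP; exists [ffun i => tnth t i]; apply/and3P; split.
  - by apply/injectiveP => i j; rewrite !ffunE => /(tuple_uniqP _ tu).
  - apply/eqP/setP => x; rewrite inE; apply/imsetP/tnthP.
      by move=> [i _ ->]; exists i; rewrite ffunE.
    by move=> [i ->]; exists i; rewrite ?ffunE.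
  - by apply/forallP => i; apply/forallP => j; rewrite -tF !ffunE.
rewrite /deck_count -/(deck_sets _) -sum_nat_const; apply: eq_bigr => S SD.
by rewrite sum1dep_card card_copies_on.
Qed.

Lemma copies_simple k (F : lgraph k) :
  simple_graph e -> 0 < copies F -> simple_graph (fun i j => F i j).
Proof.
move=> [esym eirr]; rewrite /copies card_gt0 => /set0Pn [t]; rewrite inE.
move=> /andP[_ /eqP <-]; split; first by move=> i j; rewrite !ffunE esym.
by move=> i; rewrite !ffunE eirr.
Qed.

Lemma sum_uniq_tuples k (phi : lgraph k -> nat) :
  \sum_(t : k.-tuple V | uniq t) phi (tuple_lgraph t) = \sum_F copies F * phi F.
Proof.
rewrite (partition_big (@tuple_lgraph k) xpredT) //=; apply: eq_bigr => F _.
rewrite (eq_bigr (fun _ => phi F)); last by move=> t /andP[_ /eqP ->].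
by rewrite sum_nat_const; congr (_ * _); apply: eq_card => t; rewrite inE.
Qed.

End LabelledCopies.

Lemma ffactS_inj j a b : j <= a -> j <= b -> a ^_ j.+1 = b ^_ j.+1 -> a = b.
Proof.
pose f i := (i + j) ^_ j.+1.
have f_inj : injective f.
  apply/incn_inj/leq_mono/(homo_ltn ltn_trans) => i.
  rewrite /f addSn ffactSS ffactnSr addnK mulnC ltn_pmul2r ?ffact_gt0 ?leq_addl //.
  by rewrite ltnS leq_addr.
move=> ja jb ab; suff : a - j = b - j by lia.
by apply: f_inj; rewrite /f !subnK.
Qed.

Section SameDeck.
Variables (k : nat) (V1 V2 : finType) (e1 : rel V1) (e2 : rel V2).
Hypotheses (e1_simple : simple_graph e1) (e2_simple : simple_graph e2)
  (deck12 : same_deck k e1 e2).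

Lemma same_deck_copies (F : lgraph k) : copies e1 F = copies e2 F.
Proof.
have copies_eq : simple_graph (fun i j => F i j) -> copies e1 F = copies e2 F.
  by move=> F_simple; rewrite !copiesE deck12.
have [c1_0|c1_gt0] := posnP (copies e1 F); last exact/copies_eq/(copies_simple e1_simple).
have [c2_0|c2_gt0] := posnP (copies e2 F); first by rewrite c1_0 c2_0.
exact/copies_eq/(copies_simple e2_simple).
Qed.

Lemma same_deck_sum (phi : lgraph k -> nat) :
  \sum_(t : k.-tuple V1 | uniq t) phi (tuple_lgraph e1 t) =
  \sum_(t : k.-tuple V2 | uniq t) phi (tuple_lgraph e2 t).
Proof. by rewrite !sum_uniq_tuples; apply: eq_bigr => F _; rewrite same_deck_copies. Qed.

Lemma same_deck_card : 0 < k -> k <= #|V1| -> #|V1| = #|V2|.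
Proof.
have count_uniq (V : finType) : \sum_(t : k.-tuple V | uniq t) 1 = #|V| ^_ k.
  rewrite sum1dep_card -(card_uniq_tuples _ predT).
  by apply: eq_card => t; rewrite !inE all_predT.
have nV : #|V1| ^_ k = #|V2| ^_ k by rewrite -!count_uniq (same_deck_sum (fun _ => 1)).
move=> k_gt0 kV1; have kV2 : k <= #|V2| by rewrite -ffact_gt0 -nV ffact_gt0.
have [j kj] : exists j, k = j.+1 by exists k.-1; rewrite prednK.
by rewrite kj in nV kV1 kV2; exact: ffactS_inj (ltnW kV1) (ltnW kV2) nV.
Qed.

End SameDeck.

(** * Induced paths in graphs of maximum degree two *)

Definition degree (V : finType) (e : rel V) x := #|[set w | e x w]|.

Definition path_lgraph m : lgraph m :=
  [ffun i : 'I_m => [ffun j : 'I_m => (i.+1 == j :> nat) || (j.+1 == i :> nat)]].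

Definition ipath_tuple (V : finType) (e : rel V) m (t : m.-tuple V) :=
  uniq t && (tuple_lgraph e t == path_lgraph m).

Section InducedPaths.
Variables (V : finType) (e : rel V) (x0 : V).

Definition ipath (s : seq V) : Prop := uniq s /\
  forall i j, i < size s -> j < size s ->
    e (nth x0 s i) (nth x0 s j) = (i.+1 == j) || (j.+1 == i).

Lemma ipath_tupleP m (t : m.-tuple V) :
  reflect (ipath t) (ipath_tuple e t).
Proof.
apply: (iffP andP) => [[ut /eqP tP]|[ut tP]]; split => //.
  move=> i j; rewrite size_tuple => ltim ltjm.
  have /ffunP/(_ (Ordinal ltim))/ffunP/(_ (Ordinal ltjm)) := tP.
  by rewrite !ffunE !(tnth_nth x0).
apply/eqP/ffunP => i; apply/ffunP => j.
by rewrite !ffunE !(tnth_nth x0) tP ?size_tuple.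
Qed.

Lemma thead_head m (t : m.+1.-tuple V) : thead t = head x0 t.
Proof. by rewrite /thead (tnth_nth x0). Qed.

Lemma ipath_rev s : ipath s -> ipath (rev s).
Proof.
move=> [us ads]; split; first by rewrite rev_uniq.
by move=> i j; rewrite size_rev => ? ?; rewrite !nth_rev // ads; lia.
Qed.

Lemma ipath_take n s : ipath s -> ipath (take n s).
Proof.
move=> [us ads]; split; first exact: take_uniq.
move=> i j; rewrite size_take_min => ? ?; rewrite !nth_take ?ads //; lia.
Qed.

Lemma ipath_connect s x : ipath s -> x \in s -> connect e (head x0 s) x.
Proof.
move=> [_ ads] xs; rewrite -nth0 -(nth_index x0 xs).
have : index x s < size s by rewrite index_mem.
elim: (index x s) => [|i IH] lt_is; first exact: connect0.
apply: connect_trans (IH (ltnW lt_is)) (connect1 _).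
by rewrite ads ?eqxx // ltnW.
Qed.

Lemma induces_path_ipath s : ipath s -> induces_path e [set x in s].
Proof.
move=> [us ads].
have card_s : #|[set x in s]| = size s by rewrite cardsE; apply/card_uniqP.
apply/existsP; exists [ffun i : 'I_#|[set x in s]| => nth x0 s i].
have lt_s (i : 'I_#|[set x in s]|) : i < size s by rewrite -card_s.
apply/and3P; split.
- apply/injectiveP => i j; rewrite !ffunE => /eqP; rewrite nth_uniq ?lt_s //.
  by move/eqP; apply: val_inj.
- apply/eqP/setP => x; rewrite inE; apply/imsetP/idP.
    by move=> [i _ ->]; rewrite ffunE mem_nth ?lt_s.
  move=> xs; have lt_x : index x s < #|[set x in s]| by rewrite card_s index_mem.
  by exists (Ordinal lt_x); rewrite ?inE // ffunE /= nth_index.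
- by apply/forallP => i; apply/forallP => j; rewrite !ffunE ads ?lt_s.
Qed.

Lemma induces_pathP C : induces_path e C -> exists2 s, ipath s & C = [set x in s].
Proof.
case/existsP=> g /and3P[/injectiveP g_inj /eqP gC /forallP g_adj].
pose s := map g (enum 'I_#|C|).
have size_s : size s = #|C| by rewrite size_map size_enum_ord.
have nth_s i (lt_iC : i < #|C|) : nth x0 s i = g (Ordinal lt_iC).
  rewrite (nth_map (Ordinal lt_iC)) ?size_enum_ord //; congr (g _).
  by apply: val_inj; rewrite /= nth_enum_ord.
exists s; last first.
  apply/setP => x; rewrite inE -gC; apply/imsetP/mapP => [] [i _ ->]; exists i => //.
  by rewrite mem_enum.
split; first by rewrite map_inj_uniq ?enum_uniq.
move=> i j; rewrite size_s => lt_iC lt_jC; rewrite !nth_s.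
by have /forallP/(_ (Ordinal lt_jC))/eqP := g_adj (Ordinal lt_iC).
Qed.

End InducedPaths.

Lemma subn2_count_adjacent_iota i n : i < n ->
  2 - count (fun j => (i.+1 == j) || (j.+1 == i)) (iota 0 n) = (i == 0) + (i == n.-1).
Proof.
have count_adj m : count (fun j => (i.+1 == j) || (j.+1 == i)) (iota 0 m) =
    (i.+1 < m) + (0 < i <= m).
  elim: m => [|m IH]; first by case: i.
  by rewrite -[m.+1]addn1 iotaD count_cat IH /= add0n addn0; lia.
by rewrite count_adj; lia.
Qed.

Section Degree.
Variables (V : finType) (e : rel V).

Lemma degree_gt1 x a b : e x a -> e x b -> a != b -> 1 < degree e x.
Proof.
move=> xa xb ab; have <- : #|[set a; b]| = 2 by rewrite cards2 ab.
apply: subset_leq_card.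
by apply/subsetP => y; rewrite !inE => /orP[] /eqP ->.
Qed.

Lemma degree_le1_eq x a b : degree e x <= 1 -> e x a -> e x b -> a = b.
Proof.
move=> dx xa xb; apply/eqP; apply: contraTT dx => ab.
by rewrite -ltnNge (degree_gt1 xa xb ab).
Qed.

Hypothesis edeg : max_deg_le e 2.

Lemma degree2_nbr x a b c : e x a -> e x b -> e x c -> a != b -> (c == a) || (c == b).
Proof.
move=> xa xb xc ab; apply: contraT; rewrite negb_or => /andP[ca cb].
have : #|c |: [set a; b]| <= 2.
  apply: leq_trans (edeg x); apply: subset_leq_card; apply/subsetP => y.
  by rewrite !inE => /orP[|/orP[]] /eqP ->.
by rewrite cardsU1 cards2 ab !inE negb_or ca cb.
Qed.

End Degree.

Section DegreeTwo.
Variables (V : finType) (e : rel V) (x0 : V).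
Hypotheses (esym : symmetric e) (eirr : irreflexive e) (edeg : max_deg_le e 2).

Lemma ipath_inner_nbr s i w : ipath e x0 s -> 0 < i -> i.+1 < size s ->
  e (nth x0 s i) w -> w \in s.
Proof.
move=> [us ads] i_gt0 lt_is iw.
have lt_pred : i.-1 < size s by lia.
have i_prev : e (nth x0 s i) (nth x0 s i.-1) by rewrite ads ?prednK ?eqxx ?orbT //; lia.
have i_next : e (nth x0 s i) (nth x0 s i.+1) by rewrite ads ?eqxx //; lia.
have prev_next : nth x0 s i.-1 != nth x0 s i.+1 by rewrite nth_uniq //; lia.
by case/orP: (degree2_nbr edeg i_prev i_next iw prev_next) => /eqP ->; rewrite mem_nth.
Qed.

Lemma ipath_rcons s u : ipath e x0 s -> degree e (head x0 s) <= 1 ->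
  e (last x0 s) u -> u \notin s -> ipath e x0 (rcons s u).
Proof.
move=> ps dh lu us; have [uq ads] := ps.
have no_chord i : i.+1 < size s -> ~~ e (nth x0 s i) u.
  move=> lt_is; apply/negP => iu; case: i lt_is iu => [|i] lt_is iu.
    have s0s1 : e (nth x0 s 0) (nth x0 s 1) by rewrite ads //; lia.
    by rewrite -(degree_le1_eq dh s0s1 iu) mem_nth // ltnW in us.
  by rewrite (ipath_inner_nbr ps _ lt_is iu) in us.
split; first by rewrite rcons_uniq us uq.
move=> i j; rewrite size_rcons !nth_rcons !ltnS => Hi Hj.
have [lt_is|ge_is] := ltnP i (size s); have [lt_js|ge_js] := ltnP j (size s).
- by rewrite ads.
- have -> : j = size s by lia.
  rewrite eqxx; have [si|si] := eqVneq i.+1 (size s).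
    by move: lu; rewrite -nth_last -si.
  by rewrite (negbTE (no_chord i _)) ?(negbTE si) //=; lia.
- have -> : i = size s by lia.
  rewrite eqxx esym; have [sj|sj] := eqVneq j.+1 (size s).
    by rewrite orbT; move: lu; rewrite -nth_last -sj.
  by rewrite (negbTE (no_chord j _)) ?(negbTE sj) //=; lia.
- have -> : i = size s by lia.
  have -> : j = size s by lia.
  by rewrite eqxx eirr; lia.
Qed.

Lemma ipath_extend s : ipath e x0 s -> s != [::] -> degree e (head x0 s) <= 1 ->
  exists s', [/\ ipath e x0 s', s' != [::], head x0 s' = head x0 s
               & {subset e (last x0 s') <= s'}].
Proof.
have [n] := ubnP (#|V| - size s); elim: n s => // n IH s lt_n ps sn dh.
have [closed_last|] := boolP [forall w, e (last x0 s) w ==> (w \in s)].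
  by exists s; split=> // w lw; move/forallP/(_ w)/implyP: closed_last; apply.
case/forallPn=> u; rewrite negb_imply => /andP[lu us].
have ps' := ipath_rcons ps dh lu us.
have head_rcons : head x0 (rcons s u) = head x0 s by case: (s) sn.
have size_rcons_le : size (rcons s u) <= #|V|.
  by have [u_uniq _] := ps'; rewrite -(card_uniqP u_uniq) max_card.
have lt_n' : #|V| - size (rcons s u) < n.
  by move: size_rcons_le lt_n; rewrite size_rcons; lia.
have rcons_n : rcons s u != [::] by case: (s).
have dh' : degree e (head x0 (rcons s u)) <= 1 by rewrite head_rcons.
have [s' [ps'' s'n hs' cs']] := IH _ lt_n' ps' rcons_n dh'.
by exists s'; split; rewrite // hs'.
Qed.

Lemma ipath_closed s : ipath e x0 s -> degree e (head x0 s) <= 1 ->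
  {subset e (last x0 s) <= s} -> {in s, forall x, {subset e x <= s}}.
Proof.
move=> ps dh closed_last x xs y xy; have [us ads] := ps.
have lt_xs : index x s < size s by rewrite index_mem.
have nth_x : nth x0 s (index x s) = x by rewrite nth_index.
have [x_last|x_not_last] := eqVneq (index x s).+1 (size s).
  by apply: closed_last; rewrite -nth_last -x_last /= nth_x.
have [x_head|x_inner] := posnP (index x s).
  have lt_1s : 1 < size s by lia.
  have x_s1 : e x (nth x0 s 1) by rewrite -nth_x x_head ads // ltnW.
  have hx : head x0 s = x by rewrite -nth0 -x_head.
  have dx : degree e x <= 1 by rewrite -hx.
  by rewrite (degree_le1_eq dx (xy : e x y) x_s1) mem_nth.
by apply: (ipath_inner_nbr ps x_inner); rewrite ?nth_x //; lia.
Qed.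

Lemma ipath_component s : ipath e x0 s -> s != [::] ->
  {in s, forall x, {subset e x <= s}} ->
  [set w | connect e (head x0 s) w] = [set x in s].
Proof.
move=> ps sn s_closed; apply/setP => w; rewrite !inE; apply/idP/idP; last exact: ipath_connect.
have closed_s : closed e (mem s).
  move=> x y xy; have yx : e y x by rewrite esym.
  by apply/idP/idP => [xs|ys]; [exact: s_closed xs y xy | exact: s_closed ys x yx].
by move=> /(closed_connect closed_s) <-; case: (s) sn => //= x ? _; rewrite mem_head.
Qed.

Lemma component_of_end s : ipath e x0 s -> s != [::] -> degree e (head x0 s) <= 1 ->
  induces_path e [set w | connect e (head x0 s) w] &&
  (size s <= #|[set w | connect e (head x0 s) w]|).
Proof.
move=> ps sn dh; have [s' [ps' s'n hs' closed_last]] := ipath_extend ps sn dh.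
have dh' : degree e (head x0 s') <= 1 by rewrite hs'.
have s'_closed := ipath_closed ps' dh' closed_last.
have comp_s' : [set w | connect e (head x0 s) w] = [set x in s'].
  by rewrite -hs' ipath_component.
rewrite comp_s' (induces_path_ipath ps') /= -comp_s'.
have [us _] := ps; rewrite -(card_uniqP us); apply: subset_leq_card.
by apply/subsetP => x xs; rewrite inE ipath_connect.
Qed.

Lemma degree_ipath s x : ipath e x0 s -> {in s, forall y, {subset e y <= s}} -> x \in s ->
  2 - degree e x = (x == head x0 s) + (x == last x0 s).
Proof.
move=> [us ads] s_closed xs.
have lt_xs : index x s < size s by rewrite index_mem.
have nth_x : nth x0 s (index x s) = x by rewrite nth_index.
set i := index x s in lt_xs nth_x *.
have -> : degree e x = count (e x) s.
  rewrite /degree -size_filter -(card_uniqP (filter_uniq _ us)); apply: eq_card => w.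
  rewrite inE mem_filter; apply/idP/andP => [xw|[] //]; split=> //.
  exact: s_closed xs w xw.
have -> : count (e x) s =
    count (fun j => (i.+1 == j) || (j.+1 == i)) (iota 0 (size s)).
  rewrite -{1}(mkseq_nth x0 s) /mkseq count_map; apply: eq_in_count => j.
  by rewrite mem_iota /= => lt_js; rewrite -{1}nth_x ads.
have lt_last : (size s).-1 < size s by rewrite prednK // (leq_ltn_trans _ lt_xs).
rewrite (subn2_count_adjacent_iota lt_xs) -nth0 -nth_last -nth_x.
by rewrite !nth_uniq // (leq_ltn_trans _ lt_xs).
Qed.

Lemma ipath_from_end_eq s1 s2 : ipath e x0 s1 -> ipath e x0 s2 -> size s1 = size s2 ->
  head x0 s1 = head x0 s2 -> degree e (head x0 s1) <= 1 -> s1 = s2.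
Proof.
move=> [u1 a1] [u2 a2] sz hh dh; apply: (eq_from_nth (x0 := x0) sz).
suff agree i : i < size s1 -> nth x0 s1 i = nth x0 s2 i /\
    (i.+1 < size s1 -> nth x0 s1 i.+1 = nth x0 s2 i.+1) by move=> i /agree [].
elim: i => [|i IH] lt_i1.
  split; first by rewrite !nth0.
  move=> lt_12; apply: (degree_le1_eq dh); first by rewrite -nth0 a1.
  by rewrite hh -nth0 a2 // -sz.
have [eq_i eq_i1] := IH (ltnW lt_i1); split=> [|lt_i2s]; first exact: eq_i1.
have lt_i2' : i.+2 < size s2 by rewrite -sz.
have nbr_prev : e (nth x0 s1 i.+1) (nth x0 s1 i) by rewrite a1 ?eqxx ?orbT // ltnW.
have nbr_next1 : e (nth x0 s1 i.+1) (nth x0 s1 i.+2) by rewrite a1 ?eqxx.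
have nbr_next2 : e (nth x0 s1 i.+1) (nth x0 s2 i.+2) by rewrite eq_i1 // a2 ?eqxx // ltnW.
have lt_i1s : i < size s1 by rewrite ltnW // ltnW.
have prev_next : nth x0 s1 i != nth x0 s1 i.+2 by rewrite nth_uniq // ltn_eqF.
case/orP: (degree2_nbr edeg nbr_prev nbr_next1 nbr_next2 prev_next) => /eqP // prev2.
by move/eqP: prev2; rewrite eq_i nth_uniq ?gtn_eqF // ltnW // ltnW.
Qed.

Lemma card_ipath_tuples_from_head m s : ipath e x0 s ->
  {in s, forall y, {subset e y <= s}} -> m < size s ->
  #|[set t : m.+1.-tuple V | ipath_tuple e t && (thead t == head x0 s)]| = 1.
Proof.
move=> ps s_closed lt_ms.
have head_s : head x0 s \in s by rewrite -nth0 mem_nth // (leq_ltn_trans _ lt_ms).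
have dh : degree e (head x0 s) <= 1.
  by have := degree_ipath ps s_closed head_s; rewrite eqxx; lia.
have head_take : head x0 (take m.+1 s) = head x0 s by case: (s).
have size_take_s : size (take m.+1 s) == m.+1 by rewrite size_takel.
apply/eqP/cards1P; exists (Tuple size_take_s); apply/setP => t; rewrite !inE.
apply/andP/eqP => [[/(ipath_tupleP e x0) pt /eqP ht]|->].
  apply: val_inj; apply: ipath_from_end_eq pt (ipath_take _ ps) _ _ _.
  - by rewrite size_tuple (eqP size_take_s).
  - by rewrite -(thead_head x0) ht.
  - by rewrite -(thead_head x0) ht.
split; first exact/(ipath_tupleP e x0)/ipath_take.
by rewrite (thead_head x0) head_take.
Qed.

End DegreeTwo.

(** * Counting path components *)

Section PathComponents.
Variables (V : finType) (e : rel V).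
Hypotheses (esym : symmetric e) (eirr : irreflexive e) (edeg : max_deg_le e 2).

Lemma component_eq C x : is_component e C -> ([set w | connect e x w] == C) = (x \in C).
Proof.
case/existsP=> v /eqP ->; apply/eqP/idP => [<-|]; first by rewrite inE connect0.
rewrite inE => vx; apply/setP => w.
by rewrite !inE (same_connect (sym_connect_sym esym) vx).
Qed.

Lemma component_closed C : is_component e C -> {in C, forall x, {subset e x <= C}}.
Proof.
case/existsP=> v /eqP -> x; rewrite inE => vx y xy; rewrite inE.
exact: connect_trans vx (connect1 xy).
Qed.

Lemma sum_end_weight_nonpath m C : is_component e C ->
  ~~ (induces_path e C && (m < #|C|)) ->
  \sum_(t : m.+1.-tuple V | ipath_tuple e t && (thead t \in C)) (2 - degree e (thead t)) = 0.
Proof.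
move=> compC not_pathC; apply: big1 => t /andP[pt tC].
have [dh|] := leqP (degree e (thead t)) 1; last by move=> d_gt1; apply/eqP; rewrite subn_eq0.
have pt' := elimT (ipath_tupleP e (thead t) t) pt.
have tn : (t : seq V) != [::] by rewrite -size_eq0 size_tuple.
have := component_of_end esym eirr edeg pt' tn; rewrite -(thead_head (thead t)) dh.
rewrite (eqP (_ : [set w | connect e (thead t) w] == C)) ?component_eq // size_tuple.
by move=> /(_ isT) end_path; rewrite end_path in not_pathC.
Qed.

Lemma sum_end_weight_path m C : is_component e C -> induces_path e C -> m < #|C| ->
  \sum_(t : m.+1.-tuple V | ipath_tuple e t && (thead t \in C)) (2 - degree e (thead t)) = 2.
Proof.
move=> compC pathC lt_mC.
have [x0 x0C] : exists x0, x0 \in C by apply/set0Pn; rewrite -card_gt0 (leq_ltn_trans _ lt_mC).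
have [s ps defC] := induces_pathP x0 pathC.
have s_closed : {in s, forall y, {subset e y <= s}}.
  move=> y ys w yw; have yC : y \in C by rewrite defC inE.
  by have := component_closed compC yC yw; rewrite defC inE.
have rev_closed : {in rev s, forall y, {subset e y <= rev s}}.
  by move=> y; rewrite !mem_rev => ys w yw; rewrite mem_rev (s_closed y).
have lt_ms : m < size s by have [us _] := ps; rewrite -(card_uniqP us) -cardsE -defC.
have head_rev : head x0 (rev s) = last x0 s.
  by case/lastP: (s) => // s' y; rewrite rev_rcons last_rcons.
have count_from h : h \in s ->
    \sum_(t : m.+1.-tuple V | ipath_tuple e t && (thead t \in C)) (thead t == h) =
    #|[set t : m.+1.-tuple V | ipath_tuple e t && (thead t == h)]|.
  move=> hs; rewrite -sum1dep_card big_mkcond [RHS]big_mkcond; apply: eq_bigr => t _.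
  by case: eqP => [->|]; rewrite ?defC ?inE ?hs ?andbT ?andbF //; case: ifP.
rewrite (eq_bigr (fun t => (thead t == head x0 s) + (thead t == head x0 (rev s)))); last first.
  by move=> t /andP[_]; rewrite defC inE head_rev; apply: degree_ipath.
rewrite big_split /= !count_from ?card_ipath_tuples_from_head ?size_rev ?mem_rev //.
- exact: ipath_rev.
- by rewrite -mem_rev -nth0 mem_nth ?size_rev // (leq_ltn_trans _ lt_ms).
- by rewrite -nth0 mem_nth // (leq_ltn_trans _ lt_ms).
Qed.

Lemma sum_end_weight m :
  \sum_(t : m.+1.-tuple V | ipath_tuple e t) (2 - degree e (thead t)) =
  2 * num_path_comps_ge e m.+1.
Proof.
rewrite (partition_big (fun t => [set w | connect e (thead t) w]) (is_component e)) /=; last first.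
  by move=> t _; apply/existsP; exists (thead t).
rewrite /num_path_comps_ge -sum1dep_card big_distrr /= big_mkcond [RHS]big_mkcond.
apply: eq_bigr => C _; case: ifP => // compC.
under eq_bigl => t do rewrite component_eq //.
have [/andP[pathC lt_mC]|not_pathC] := boolP (induces_path e C && (m < #|C|)).
  by rewrite sum_end_weight_path.
by rewrite sum_end_weight_nonpath //; case: ifP => // /andP[].
Qed.

End PathComponents.

Definition lgraph_behead m (F : lgraph m.+1) : lgraph m :=
  [ffun i => [ffun j => F (lift ord0 i) (lift ord0 j)]].

Section AddVertex.
Variables (V : finType) (e : rel V).

Lemma lgraph_behead_cons m (t : m.-tuple V) v :
  lgraph_behead (tuple_lgraph e [tuple of v :: t]) = tuple_lgraph e t.
Proof. by apply/ffunP => i; apply/ffunP => j; rewrite !ffunE !tnthS. Qed.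

Lemma sum_uniq_tuples_cons m (psi : m.+1.-tuple V -> nat) :
  \sum_(t : m.+1.-tuple V | uniq t) psi t =
  \sum_(t : m.-tuple V | uniq t) \sum_(v | v \notin t) psi [tuple of v :: t].
Proof.
pose cons_tuple (p : m.-tuple V * V) : m.+1.-tuple V := [tuple of p.2 :: p.1].
have cons_bij : bijective cons_tuple.
  exists (fun t : m.+1.-tuple V => ([tuple of behead t], thead t)).
    by move=> [t v]; congr pair; apply: val_inj.
  by move=> t; case/tupleP: t => x t; apply: val_inj.
rewrite (reindex cons_tuple) /=; last exact: onW_bij.
under [RHS]eq_bigr => t _ do rewrite big_mkcond.
rewrite pair_big /= big_mkcond [RHS]big_mkcond; apply: eq_bigr => [[t v]] _ /=.
by rewrite andbT; case: (v \in t); case: (uniq t).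
Qed.

Lemma card_notin_uniq_tuple m (t : m.-tuple V) : uniq t -> #|[set v | v \notin t]| = #|V| - m.
Proof.
move=> ut; have card_t : #|[set x in t]| = m.
  by rewrite cardsE; move/card_uniqP: ut => ->; rewrite size_tuple.
rewrite -(cardsC [set x in t]) card_t addKn.
by apply: eq_card => v; rewrite !inE.
Qed.

Lemma sum_uniq_tuples_behead m (phi : lgraph m -> nat) :
  (#|V| - m) * \sum_(t : m.-tuple V | uniq t) phi (tuple_lgraph e t) =
  \sum_(t : m.+1.-tuple V | uniq t) phi (lgraph_behead (tuple_lgraph e t)).
Proof.
rewrite sum_uniq_tuples_cons big_distrr; apply: eq_bigr => t ut /=.
under eq_bigr => v _ do rewrite lgraph_behead_cons.
rewrite sum_nat_const -(card_notin_uniq_tuple ut); congr (_ * _).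
by apply: eq_card => v; rewrite inE.
Qed.

Lemma sum_uniq_tuples_outer_nbr m (P : lgraph m.+1 -> bool) :
  \sum_(t : m.+2.-tuple V | uniq t)
     (P (lgraph_behead (tuple_lgraph e t)) && tuple_lgraph e t ord0 (lift ord0 ord0)) =
  \sum_(t : m.+1.-tuple V | uniq t)
     P (tuple_lgraph e t) * #|[set v | (v \notin t) && e v (thead t)]|.
Proof.
rewrite sum_uniq_tuples_cons; apply: eq_bigr => t ut.
under eq_bigr => v _ do rewrite lgraph_behead_cons !ffunE tnth0 tnthS.
case: (P _) => /=; last by rewrite mul0n big1.
by rewrite mul1n -sum1dep_card big_mkcondr.
Qed.

Lemma degree_thead m (t : m.+1.-tuple V) : symmetric e -> uniq t ->
  degree e (thead t) = #|[set i | tuple_lgraph e t ord0 i]| +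
                       #|[set v | (v \notin t) && e v (thead t)]|.
Proof.
move=> esym ut; rewrite /degree -(cardsID [set x in t]); congr (_ + _).
  rewrite -(card_imset _ (elimT (tuple_uniqP t) ut)); apply: eq_card => w; rewrite !inE.
  apply/andP/imsetP => [[tw /tnthP [i wi]]|[i]]; last first.
    by rewrite inE !ffunE => ti ->; split; [exact: ti | exact: mem_tnth].
  by exists i => //; rewrite inE !ffunE -wi.
by apply: eq_card => w; rewrite !inE esym.
Qed.

End AddVertex.

Definition behead_is_path m (F : lgraph m.+2) := lgraph_behead F == path_lgraph m.+1.

Definition behead_path_head_degree m (F : lgraph m.+2) :=
  behead_is_path F * #|[set i | lgraph_behead F ord0 i]|.

Definition behead_path_extended m (F : lgraph m.+2) := behead_is_path F && F ord0 (lift ord0 ord0).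

Section PathCount.
Variables (V : finType) (e : rel V).
Hypotheses (esym : symmetric e) (eirr : irreflexive e) (edeg : max_deg_le e 2).

Lemma path_tuples_identity m :
  2 * num_path_comps_ge e m.+1
  + \sum_(t : m.+1.-tuple V | uniq t)
      (tuple_lgraph e t == path_lgraph m.+1) * #|[set i | tuple_lgraph e t ord0 i]|
  + \sum_(t : m.+1.-tuple V | uniq t)
      (tuple_lgraph e t == path_lgraph m.+1) * #|[set v | (v \notin t) && e v (thead t)]|
  = 2 * \sum_(t : m.+1.-tuple V | uniq t) (tuple_lgraph e t == path_lgraph m.+1).
Proof.
rewrite -sum_end_weight // big_mkcondr big_distrr -!big_split /=.
apply: eq_bigr => t ut; case: (_ == _) => //=.
by rewrite !mul1n -addnA -degree_thead // subnK ?edeg.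
Qed.

Lemma lifted_path_tuples_identity m :
  (#|V| - m.+1) * (2 * num_path_comps_ge e m.+1)
  + \sum_(t : m.+2.-tuple V | uniq t) behead_path_head_degree (tuple_lgraph e t)
  + (#|V| - m.+1) * \sum_(t : m.+2.-tuple V | uniq t) behead_path_extended (tuple_lgraph e t)
  = 2 * \sum_(t : m.+2.-tuple V | uniq t) behead_is_path (tuple_lgraph e t).
Proof.
rewrite (sum_uniq_tuples_outer_nbr _ (fun F => F == path_lgraph m.+1)).
rewrite -(sum_uniq_tuples_behead _ (fun F => (F == path_lgraph m.+1) * #|[set i | F ord0 i]|)).
rewrite -(sum_uniq_tuples_behead _ (fun F => nat_of_bool (F == path_lgraph m.+1))).
by rewrite -!mulnDr path_tuples_identity mulnCA.
Qed.

End PathCount.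

Theorem lemma4p3 (k : nat) (V1 V2 : finType) (e1 : rel V1) (e2 : rel V2) :
  2 <= k -> k <= #|V1| ->
  simple_graph e1 -> simple_graph e2 ->
  max_deg_le e1 2 -> max_deg_le e2 2 ->
  same_deck k e1 e2 ->
  num_path_comps_ge e1 k.-1 = num_path_comps_ge e2 k.-1.
Proof.
move=> k2 kV1 e1_simple e2_simple e1_deg e2_deg deck12.
have nV : #|V1| = #|V2| by apply: same_deck_card e1_simple e2_simple deck12 _ kV1; lia.
case: k k2 kV1 deck12 => [|[|m]] // _ kV1 deck12.
have [sym1 irr1] := e1_simple; have [sym2 irr2] := e2_simple.
have := lifted_path_tuples_identity sym1 irr1 e1_deg m.
rewrite (same_deck_sum e1_simple e2_simple deck12 (@behead_path_head_degree m))
        (same_deck_sum e1_simple e2_simple deck12 (@behead_path_extended m))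
        (same_deck_sum e1_simple e2_simple deck12 (@behead_is_path m)).
rewrite nV -(lifted_path_tuples_identity sym2 irr2 e2_deg m) => /eqP.
rewrite !eqn_add2r eqn_mul2l eqn_mul2l /= subn_eq0 -nV leqNgt kV1 /=.
by move/eqP.
Qed.
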